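(* Let $\mathcal{G}$ be a connected undirected graph on $n>1$ nodes, i.e. a symmetric, strongly connected digraph, with the uniform weights described in the context. If $\epsilon\in\big(0,(1-\tfrac1n)(2-\tfrac1n)\big)$, then the deterministic algorithm with parameter $\epsilon$ achieves average consensus.
   Context: Setting: $\mathcal{G}=(\mathcal{V},\mathcal{E})$ with $\mathcal{V}=\{1,\dots,n\}$ and no selfloops. Symmetric means that $(j,i)\in\mathcal{E}$ implies $(i,j)\in\mathcal{E}$. The degree of $\mathcal{G}$ is $d=\max_i|\{j:(j,i)\in\mathcal{E}\}|$. Weights: $a_{ij}=1/(2dn)$ if $(j,i)\in\mathcal{E}$ and $0$ otherwise. Also $b_{ih}=1/(dn)$ if $(i,h)\in\mathcal{E}$ and $0$ otherwise. Matrices: $L=D-A$, where $A=[a_{ij}]$ and $D=\mathrm{diag}(\sum_j a_{ij})$. $S=(I-\tilde D)+B$, where $B=[b_{ih}]^T$ and $\tilde D=\mathrm{diag}(\sum_h b_{ih})$. Also $M=\begin{bmatrix} I-L & \epsilon I\\ L & S-\epsilon I\end{bmatrix}$. Deterministic algorithm: $(x(k+1),s(k+1))^T=M(x(k),s(k))^T$ with $s(0)=0$. Average consensus: for every $x(0)\in\mathbb{R}^n$, $(x(k),s(k))\to(x_a\mathbf{1},0)$ where $x_a=\mathbf{1}^Tx(0)/n$. *)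

From HB Require Import structures.
From mathcomp Require Import all_boot all_order all_algebra.
From mathcomp Require Import all_classical all_reals all_analysis.
Set Implicit Arguments. Unset Strict Implicit. Unset Printing Implicit Defensive.
Import Order.TTheory GRing.Theory Num.Theory.
Local Open Scope ring_scope.
Local Open Scope classical_set_scope.
Import numFieldNormedType.Exports.

Section Consensus.
Variables (R : realType) (n : nat) (e : rel 'I_n).
(* e j i  means  (j,i) \in E *)

Definition no_selfloops := forall i, ~~ e i i.
Definition symmetric_graph := forall i j, e j i -> e i j.
Definition strongly_connected := forall i j, connect e i j.

Definition degree : nat := \max_(i : 'I_n) #|[set j | e j i]|.

Definition Amat : 'M[R]_n :=
  \matrix_(i, j) (if e j i then (2 * degree * n)%:R^-1 else 0).
Definition Dmat : 'M[R]_n := \matrix_(i, j) ((i == j)%:R * \sum_k Amat i k).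
Definition Lmat : 'M[R]_n := Dmat - Amat.

Definition bw (i h : 'I_n) : R := if e i h then (degree * n)%:R^-1 else 0.
Definition Bmat : 'M[R]_n := (\matrix_(i, h) bw i h)^T.
Definition Dtilde : 'M[R]_n := \matrix_(i, j) ((i == j)%:R * \sum_h bw i h).
Definition Smat : 'M[R]_n := (1%:M - Dtilde) + Bmat.

Definition Mmat (eps : R) : 'M[R]_(n + n) :=
  block_mx (1%:M - Lmat) (eps%:M) Lmat (Smat - eps%:M).

(* state (x(k), s(k)) stacked as a column vector, with s(0) = 0 *)
Definition state (eps : R) (x0 : 'cV[R]_n) (k : nat) : 'cV[R]_(n + n) :=
  iter k (fun z => Mmat eps *m z) (col_mx x0 0).
Definition xk (eps : R) (x0 : 'cV[R]_n) (k : nat) : 'cV[R]_n :=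
  usubmx (state eps x0 k).
Definition sk (eps : R) (x0 : 'cV[R]_n) (k : nat) : 'cV[R]_n :=
  dsubmx (state eps x0 k).

(* average consensus: x(k) -> x_a 1 and s(k) -> 0 (entrywise, equivalently
   in any norm on the finite-dimensional space) *)
Definition average_consensus (eps : R) : Prop :=
  forall x0 : 'cV[R]_n,
    let xa := (\sum_i x0 i 0) / n%:R in
    forall i : 'I_n,
      ((fun k => xk eps x0 k i 0) @ \oo --> xa) /\
      ((fun k => sk eps x0 k i 0) @ \oo --> (0 : R)).

End Consensus.

From mathcomp Require Import all_boot all_order all_algebra.
From mathcomp Require Import all_classical all_reals all_analysis.
From mathcomp Require Import complex ring lra.
Import Order.TTheory GRing.Theory Num.Theory.
Import numFieldNormedType.Exports.
Local Open Scope classical_set_scope.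
Local Open Scope ring_scope.
Set Implicit Arguments.
Unset Strict Implicit.
Unset Printing Implicit Defensive.

(* Over R[i] the symmetric Laplacian L has a unitary eigenbasis with real
   eigenvalues; the real and imaginary parts of its vectors form a Parseval
   frame of real left eigenvectors of L.  Since S = I - 2L, along an
   eigenvector c with eigenvalue p the components of the consensus error
   x(k) - x_a 1 and of s(k) evolve by the 2x2 matrix
   [[1 - p, eps], [p, 1 - 2p - eps]].  The weights force 0 <= p <= 1/n.  For
   p > 0 the bound on eps puts both eigenvalues of that matrix in (-1, 1); for
   p = 0 connectivity makes c constant, so the error component starts, and
   stays, at 0.  Expanding in the frame gives convergence entrywise. *)

Section SymmetricEigenframe.
Variable R : rcfType.
Local Open Scope sesquilinear_scope.
Local Notation C := (complex R).
Local Notation Re := (@complex.Re R).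
Local Notation Im := (@complex.Im R).

Lemma Remx_mul m n p (A : 'M[C]_(m, n)) (B : 'M[C]_(n, p)) :
  map_mx Re (A *m B) = map_mx Re A *m map_mx Re B - map_mx Im A *m map_mx Im B.
Proof.
apply/matrixP => i j; rewrite !mxE (big_morph Re (id1 := 0) (op1 := +%R)) //.
  rewrite -sumrB; apply: eq_bigr => k _.
  by rewrite !mxE; case: (A i k); case: (B k j).
by case=> ? ?; case.
Qed.

Lemma Immx_mul m n p (A : 'M[C]_(m, n)) (B : 'M[C]_(n, p)) :
  map_mx Im (A *m B) = map_mx Re A *m map_mx Im B + map_mx Im A *m map_mx Re B.
Proof.
apply/matrixP => i j; rewrite !mxE (big_morph Im (id1 := 0) (op1 := +%R)) //.
  rewrite -big_split; apply: eq_bigr => k _.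
  by rewrite !mxE; case: (A i k); case: (B k j).
by case=> ? ?; case.
Qed.

Lemma Remx_real m n (A : 'M[R]_(m, n)) : map_mx Re (map_mx (real_complex R) A) = A.
Proof. by apply/matrixP => i j; rewrite !mxE. Qed.

Lemma Immx_real m n (A : 'M[R]_(m, n)) : map_mx Im (map_mx (real_complex R) A) = 0.
Proof. by apply/matrixP => i j; rewrite !mxE. Qed.

Lemma Remx_conjT m n (A : 'M[C]_(m, n)) : map_mx Re (A ^t*) = (map_mx Re A)^T.
Proof. by apply/matrixP => i j; rewrite !mxE; case: (A j i). Qed.

Lemma Immx_conjT m n (A : 'M[C]_(m, n)) : map_mx Im (A ^t*) = - (map_mx Im A)^T.
Proof. by apply/matrixP => i j; rewrite !mxE; case: (A j i). Qed.

(* The rows of [V] are the real and imaginary parts of the rows of a unitary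
   eigenbasis of [L] over [R[i]]; they form a Parseval frame, [V^T V = 1]. *)
Lemma symmetric_eigenframe n (L : 'M[R]_n) : L^T = L ->
  exists (V : 'M[R]_(n + n, n)) (p : 'rV[R]_(n + n)),
    V *m L = diag_mx p *m V /\ V^T *m V = 1%:M.
Proof.
move=> Lsym; pose Lc := map_mx (real_complex R) L.
have Lc_herm : Lc \is hermsymmx.
  apply: realsym_hermsym.
    by apply/is_hermitianmxP; rewrite expr0 scale1r map_mx_id // map_trmx Lsym.
  by apply/mxOverP => i j; rewrite mxE complex_real.
set U := spectralmx Lc; set d := spectral_diag Lc.
have U_unitary : U \is unitarymx := spectral_unitarymx Lc.
have ULc : U *m Lc = diag_mx d *m U.
  have /orthomx_spectralP -> := hermitian_normalmx Lc_herm.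
  by rewrite !mulmxA mulmxV ?spectral_unit // mul1mx.
have UtU : U ^t* *m U = 1%:M by rewrite -invmx_unitary // mulVmx ?spectral_unit.
pose dr := map_mx Re d.
have d_real : d = map_mx (real_complex R) dr.
  apply/matrixP => i j; rewrite !mxE RRe_real //.
  exact: (mxOverP (hermitian_spectral_diag_real Lc_herm)).
have diag_real : diag_mx d = map_mx (real_complex R) (diag_mx dr).
  by rewrite d_real; apply/matrixP => i j; rewrite !mxE; case: (i == j).
exists (col_mx (map_mx Re U) (map_mx Im U)), (row_mx dr dr); split.
  rewrite diag_mx_row mul_block_col !mul0mx addr0 add0r mul_col_mx.
  congr col_mx.
    have := congr1 (map_mx Re) ULc.
    by rewrite /Lc diag_real !Remx_mul !Remx_real !Immx_real mulmx0 mul0mx !subr0.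
  have := congr1 (map_mx Im) ULc.
  by rewrite /Lc diag_real !Immx_mul !Remx_real !Immx_real mulmx0 mul0mx addr0 add0r.
have := congr1 (map_mx Re) UtU.
rewrite Remx_mul Remx_conjT Immx_conjT mulNmx opprK tr_col_mx mul_row_col => ->.
by apply/matrixP => i j; rewrite !mxE; case: (i == j).
Qed.

End SymmetricEigenframe.

Section LinearRecurrence.
Variable R : realType.

Lemma cvg_recurrence2 (m1 m2 : R) (z : nat -> R) :
  `|m1| < 1 -> `|m2| < 1 -> m1 != m2 ->
  (forall k, z k.+2 = (m1 + m2) * z k.+1 - m1 * m2 * z k) ->
  z @ \oo --> 0.
Proof.
move=> m1_lt1 m2_lt1 m12 zS.
have geom m m' : m + m' = m1 + m2 -> m * m' = m1 * m2 ->
    forall k, z k.+1 - m' * z k = m ^+ k * (z 1%N - m' * z 0%N).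
  move=> sum prod; elim=> [|k IH]; first by rewrite mul1r.
  by rewrite exprS -mulrA -IH zS -sum -prod; ring.
have geom1 := geom m1 m2 erefl erefl.
have geom2 := geom m2 m1 (addrC _ _) (mulrC _ _).
have m12_neq0 : m1 - m2 != 0 by rewrite subr_eq0.
have -> : z = fun k => m1 ^+ k * ((z 1%N - m2 * z 0%N) / (m1 - m2)) -
                       m2 ^+ k * ((z 1%N - m1 * z 0%N) / (m1 - m2)).
  apply: funext => k; rewrite !mulrA -mulrBl -geom1 -geom2.
  by apply: (mulIf m12_neq0); rewrite divfK //; ring.
have -> : 0 = 0 * ((z 1%N - m2 * z 0%N) / (m1 - m2)) -
              0 * ((z 1%N - m1 * z 0%N) / (m1 - m2)) :> R by rewrite !mul0r subr0.
by apply: cvgB; (apply: cvgM; [exact: cvg_expr | exact: cvg_cst]).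
Qed.

Lemma linear_system2_recurrence (a b c d : R) (u v : nat -> R) :
  (forall k, u k.+1 = a * u k + b * v k) ->
  (forall k, v k.+1 = c * u k + d * v k) ->
  (forall k, u k.+2 = (a + d) * u k.+1 - (a * d - b * c) * u k) /\
  (forall k, v k.+2 = (a + d) * v k.+1 - (a * d - b * c) * v k).
Proof. by move=> uS vS; split=> k; rewrite ?uS ?vS ?uS; ring. Qed.

(* [1 - T + D] and [1 + T + D] are the values of X^2 - T X + D at 1 and -1. *)
Lemma stable_quadratic_roots (T D : R) :
  4 * D < T ^+ 2 -> 0 < 1 - T + D -> 0 < 1 + T + D -> `|T| < 2 ->
  exists m1 m2 : R, [/\ m1 + m2 = T, m1 * m2 = D, `|m1| < 1, `|m2| < 1 & m1 != m2].
Proof.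
move=> disc q1 qN1; rewrite ltr_norml => /andP[TgtN2 Tlt2].
pose s := Num.sqrt (T ^+ 2 - 4 * D).
have s_gt0 : 0 < s by rewrite sqrtr_gt0 subr_gt0.
have s2 : s ^+ 2 = T ^+ 2 - 4 * D by rewrite sqr_sqrtr // subr_ge0 ltW.
have s_lt1 : s < 2 - T by nra.
have s_ltN1 : s < 2 + T by nra.
exists ((T + s) / 2), ((T - s) / 2); split.
- by field.
- have -> : (T + s) / 2 * ((T - s) / 2) = (T ^+ 2 - s ^+ 2) / 4 by field.
  by rewrite s2; field.
- by rewrite ltr_norml; apply/andP; split; lra.
- by rewrite ltr_norml; apply/andP; split; lra.
- by apply/negP => /eqP; lra.
Qed.

(* Here 1 + T + D = 2 ((1 - l) (2 - l) - eps): the bound on eps is exactly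
   what keeps the smaller root above -1. *)
Lemma cvg_coupled_recurrence (l eps : R) (u v : nat -> R) :
  0 < l -> l <= 1 -> 0 < eps -> eps < (1 - l) * (2 - l) ->
  (forall k, u k.+1 = (1 - l) * u k + eps * v k) ->
  (forall k, v k.+1 = l * u k + (1 - 2 * l - eps) * v k) ->
  u @ \oo --> 0 /\ v @ \oo --> 0.
Proof.
move=> l_gt0 l_le1 eps_gt0 eps_lt uS vS.
have [uSS vSS] := linear_system2_recurrence uS vS.
have [m1 [m2 [sum prod m1_lt1 m2_lt1 m12]]] : exists m1 m2 : R,
    [/\ m1 + m2 = 1 - l + (1 - 2 * l - eps),
        m1 * m2 = (1 - l) * (1 - 2 * l - eps) - eps * l,
        `|m1| < 1, `|m2| < 1 & m1 != m2].
  apply: stable_quadratic_roots; [nra | nra | nra |].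
  by rewrite ltr_norml; apply/andP; split; nra.
by split; apply: (cvg_recurrence2 m1_lt1 m2_lt1 m12) => k;
  rewrite ?uSS ?vSS sum prod.
Qed.

End LinearRecurrence.

Lemma mx_form_sum (R : comPzRingType) n (M : 'M[R]_n) (u : 'rV[R]_n) :
  (u *m M *m u^T) 0 0 = \sum_i \sum_j u 0 i * M i j * u 0 j.
Proof.
rewrite mxE exchange_big /=; apply: eq_bigr => j _.
by rewrite !mxE mulr_suml.
Qed.

Lemma mulmx_tr_rowE (R : pzSemiRingType) n (u : 'rV[R]_n) :
  (u *m u^T) 0 0 = \sum_i u 0 i ^+ 2.
Proof. by rewrite mxE; apply: eq_bigr => i _; rewrite mxE expr2. Qed.

Lemma sum_delta (R : pzSemiRingType) (I : finType) (i : I) (F : I -> R) :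
  \sum_j (i == j)%:R * F j = F i.
Proof.
under eq_bigr do rewrite mulr_natl mulrb eq_sym.
by rewrite -big_mkcond big_pred1_eq.
Qed.

Lemma sum_sym_weights (R : comPzRingType) (I : finType) (w : I -> I -> R) (f : I -> R) :
  (forall i j, w i j = w j i) ->
  \sum_i \sum_j w i j * (f i + f j) = 2 * \sum_i f i * \sum_j w i j.
Proof.
move=> wsym.
have wf : \sum_i \sum_j w i j * f i = \sum_i f i * \sum_j w i j.
  by apply: eq_bigr => i _; rewrite mulr_sumr; apply: eq_bigr => j _; rewrite mulrC.
have swap : \sum_i \sum_j w i j * f j = \sum_i \sum_j w i j * f i.
  by rewrite exchange_big; apply: eq_bigr => i _; apply: eq_bigr => j _; rewrite wsym.
transitivity (\sum_i \sum_j w i j * f i + \sum_i \sum_j w i j * f j).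
  rewrite -big_split; apply: eq_bigr => i _.
  by rewrite -big_split; apply: eq_bigr => j _; rewrite mulrDr.
by rewrite swap wf; ring.
Qed.

Section Laplacian.
Variables (R : realType) (n : nat) (e : rel 'I_n).
Hypothesis sym : symmetric_graph e.

Local Notation A := (Amat R e).
Local Notation L := (Lmat R e).

Lemma in_neighboursE j i : (j \in [set k | e k i]) = e j i.
Proof. by apply/idP/idP => [/set_mem //|eji]; apply: mem_set. Qed.

Lemma Amat_ge0 i j : 0 <= A i j.
Proof. by rewrite mxE; case: ifP. Qed.

Lemma Amat_sym i j : A i j = A j i.
Proof.
rewrite !mxE; case: (boolP (e j i)) => [/sym -> // | /negbTE nji].
by case: ifP => // /sym; rewrite nji.
Qed.

Lemma Amat_gt0 i j : e j i -> 0 < A i j.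
Proof.
move=> eji; rewrite mxE eji invr_gt0 ltr0n !muln_gt0 /=.
apply/andP; split; last exact: leq_ltn_trans (leq0n i) (ltn_ord i).
rewrite /degree; apply: leq_trans (leq_bigmax i); apply/card_gt0P; exists j.
by rewrite in_neighboursE.
Qed.

Lemma Amat_row_sum_le i : \sum_j A i j <= (2 * n%:R)^-1.
Proof.
have -> : \sum_j A i j = #|[set j | e j i]|%:R * (2 * degree e * n)%:R^-1.
  rewrite mulr_natl -sumr_const [RHS]big_mkcond; apply: eq_bigr => j _.
  by rewrite mxE in_neighboursE.
apply: le_trans (_ : (degree e)%:R * (2 * degree e * n)%:R^-1 <= _).
  by rewrite ler_wpM2r ?invr_ge0 ?ler0n // ler_nat; exact: (leq_bigmax i).
have [->|d_gt0] := posnP (degree e); first by rewrite mul0r invr_ge0 mulr_ge0.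
rewrite mulnAC natrM invfM mulrCA divff ?mulr1 ?natrM // pnatr_eq0 -lt0n //.
Qed.

Lemma Lmat_entry i j : L i j = (i == j)%:R * \sum_k A i k - A i j.
Proof. by rewrite !mxE. Qed.

Lemma Lmat_sym : L^T = L.
Proof.
apply/matrixP => i j; rewrite mxE !Lmat_entry Amat_sym eq_sym.
by case: eqVneq => [->|]; rewrite ?mul0r.
Qed.

Lemma Lmat_mul_const m (a : R) : L *m (const_mx a : 'M[R]_(n, m)) = 0.
Proof.
apply/matrixP => i j; rewrite mxE [RHS]mxE.
under eq_bigr do rewrite [const_mx _ _ _]mxE Lmat_entry.
by rewrite -mulr_suml sumrB sum_delta subrr mul0r.
Qed.

Lemma Smat_Lmat : Smat R e = 1%:M - 2 *: L.
Proof.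
have bwE i h : bw R e i h = 2 * A h i.
  rewrite /bw mxE; case: ifP => _; last by rewrite mulr0.
  by rewrite -mulnA [in RHS]natrM invfM mulrA divff ?mul1r ?pnatr_eq0.
apply/matrixP => i j; rewrite !mxE; under eq_bigr do rewrite bwE Amat_sym.
by rewrite bwE -mulr_sumr [A i j]mxE; ring.
Qed.

Lemma Lmat_form (u : 'rV[R]_n) :
  (u *m L *m u^T) 0 0 =
  \sum_i u 0 i ^+ 2 * \sum_j A i j - \sum_i \sum_j A i j * (u 0 i * u 0 j).
Proof.
rewrite mx_form_sum -sumrB; apply: eq_bigr => i _.
under eq_bigr do rewrite Lmat_entry mulrBr mulrBl.
rewrite sumrB; congr (_ - _); last by apply: eq_bigr => j _; ring.
under eq_bigr do rewrite mulrCA -mulrA.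
by rewrite sum_delta mulrAC expr2.
Qed.

Lemma Lmat_dirichlet (u : 'rV[R]_n) :
  2 * (u *m L *m u^T) 0 0 = \sum_i \sum_j A i j * (u 0 i - u 0 j) ^+ 2.
Proof.
rewrite Lmat_form mulrBr -(@sum_sym_weights _ _ A (fun i => u 0 i ^+ 2) Amat_sym).
rewrite mulr_sumr -sumrB; apply: eq_bigr => i _.
by rewrite mulr_sumr -sumrB; apply: eq_bigr => j _; ring.
Qed.

Lemma Lmat_form_ge0 (u : 'rV[R]_n) : 0 <= (u *m L *m u^T) 0 0.
Proof.
suff : 0 <= 2 * (u *m L *m u^T) 0 0 by rewrite pmulr_rge0.
rewrite Lmat_dirichlet; apply: sumr_ge0 => i _; apply: sumr_ge0 => j _.
by rewrite mulr_ge0 ?Amat_ge0 ?sqr_ge0.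
Qed.

Lemma Lmat_form_le (u : 'rV[R]_n) :
  (u *m L *m u^T) 0 0 <= n%:R^-1 * (u *m u^T) 0 0.
Proof.
rewrite mulmx_tr_rowE.
suff : 2 * (u *m L *m u^T) 0 0 <= 2 * (n%:R^-1 * \sum_i u 0 i ^+ 2).
  by rewrite ler_pM2l.
rewrite Lmat_dirichlet.
apply: le_trans
  (_ : \sum_i \sum_j 2 * (A i j * (u 0 i ^+ 2 + u 0 j ^+ 2)) <= _).
  apply: ler_sum => i _; apply: ler_sum => j _.
  rewrite [2 * _]mulrCA; apply: ler_wpM2l; first exact: Amat_ge0.
  by have := sqr_ge0 (u 0 i + u 0 j); nra.
under eq_bigr do rewrite -mulr_sumr.
rewrite -mulr_sumr sum_sym_weights; last exact: Amat_sym.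
rewrite ler_pM2l // mulr_sumr mulr_sumr ler_sum // => i _.
rewrite mulrCA [_ * u 0 i ^+ 2]mulrC; apply: ler_wpM2l; first exact: sqr_ge0.
by have := Amat_row_sum_le i; rewrite invfM; lra.
Qed.

Lemma Lmat_eigenvalue_bounds (c : 'rV[R]_n) p :
  c != 0 -> c *m L = p *: c -> 0 <= p <= n%:R^-1.
Proof.
move=> c_neq0 cL.
have c2_gt0 : 0 < (c *m c^T) 0 0.
  rewrite lt_def mulmx_tr_rowE sumr_ge0 ?andbT => [|i _]; last exact: sqr_ge0.
  apply: contraNneq c_neq0 => /psumr_eq0P c0; apply/eqP/rowP => i.
  by apply/eqP; rewrite mxE -sqrf_eq0 c0 // => j _; exact: sqr_ge0.
have form_c : (c *m L *m c^T) 0 0 = p * (c *m c^T) 0 0.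
  by rewrite cL -scalemxAl mxE.
have := Lmat_form_ge0 c; have := Lmat_form_le c; rewrite form_c.
by rewrite ler_pM2r // pmulr_lge0 // => -> ->.
Qed.

Lemma Lmat_kernel_const (u : 'rV[R]_n) :
  strongly_connected e -> u *m L = 0 -> forall i j, u 0 i = u 0 j.
Proof.
move=> conn uL0.
have terms_ge0 i j : 0 <= A i j * (u 0 i - u 0 j) ^+ 2.
  by rewrite mulr_ge0 ?Amat_ge0 ?sqr_ge0.
have energy0 : \sum_i \sum_j A i j * (u 0 i - u 0 j) ^+ 2 = 0.
  by rewrite -Lmat_dirichlet uL0 mul0mx mxE mulr0.
have edge_eq i j : e j i -> u 0 i = u 0 j.
  move=> eji; have row_i : \sum_j A i j * (u 0 i - u 0 j) ^+ 2 = 0.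
    by apply: (psumr_eq0P _ energy0) => // k _; exact: sumr_ge0.
  have /eqP := @psumr_eq0P _ _ _ _ (fun k _ => terms_ge0 i k) row_i j isT.
  by rewrite mulf_eq0 gt_eqF ?Amat_gt0 //= sqrf_eq0 subr_eq0 => /eqP.
move=> i j; have /connectP [p pth ->] := conn i j.
elim: p i pth => //= k p IH i /andP[eik pth].
by rewrite -(IH k pth); apply/esym/edge_eq.
Qed.

End Laplacian.

Section Modes.
Variables (R : realType) (n : nat).

Definition mode (c : 'rV[R]_n) (z : 'cV[R]_n) : R := (c *m z) 0 0.

Lemma modeD c z w : mode c (z + w) = mode c z + mode c w.
Proof. by rewrite /mode mulmxDr [LHS]mxE. Qed.

Lemma modeN c z : mode c (- z) = - mode c z.
Proof. by rewrite /mode mulmxN [LHS]mxE. Qed.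

Lemma modeZ c a z : mode c (a *: z) = a * mode c z.
Proof. by rewrite /mode -scalemxAr [LHS]mxE. Qed.

Lemma mode_eigen c p (M : 'M[R]_n) z :
  c *m M = p *: c -> mode c (M *m z) = p * mode c z.
Proof. by move=> cM; rewrite /mode mulmxA cM -scalemxAl [LHS]mxE. Qed.

Lemma mode0l z : mode 0 z = 0.
Proof. by rewrite /mode mul0mx mxE. Qed.

Lemma cvg_sum0 (I : finType) (f : I -> nat -> R) :
  (forall i, f i @ \oo --> 0) -> (fun k => \sum_i f i k) @ \oo --> 0.
Proof.
move=> f0; have := @cvg_big _ _ +%R 0 predT add_continuous _ \oo (index_enum I)
  f (fun=> 0) eventually_filter (fun i _ => f0 i).
by rewrite big1.
Qed.

Lemma cvg_frame0 m (V : 'M[R]_(m, n)) (z : nat -> 'cV[R]_n) :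
  V^T *m V = 1%:M -> (forall j, (fun k => mode (row j V) (z k)) @ \oo --> 0) ->
  forall i, (fun k => z k i 0) @ \oo --> 0.
Proof.
move=> VV z0 i.
have -> : (fun k => z k i 0) = fun k => \sum_j mode (row j V) (z k) * V j i.
  apply: funext => k; rewrite -{1}[z k]mul1mx -VV -mulmxA mxE.
  by apply: eq_bigr => j _; rewrite /mode -row_mul [(row _ _) _ _]mxE mxE mulrC.
apply: cvg_sum0 => j; rewrite -(mul0r (V j i)).
by apply: cvgM; [exact: z0 | exact: cvg_cst].
Qed.

End Modes.

Section Algorithm.
Variables (R : realType) (n : nat) (e : rel 'I_n) (eps : R) (x0 : 'cV[R]_n).
Hypotheses (sym : symmetric_graph e) (conn : strongly_connected e).
Hypotheses (n_gt0 : (0 < n)%N) (eps_gt0 : 0 < eps).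
Hypothesis eps_lt : eps < (1 - n%:R^-1) * (2 - n%:R^-1).

Local Notation L := (Lmat R e).
Local Notation x := (xk e eps x0).
Local Notation s := (sk e eps x0).
Local Notation xa := ((\sum_i x0 i 0) / n%:R).

Definition consensus_error k := x k - const_mx xa.
Local Notation err := consensus_error.

Lemma state_succ k : state e eps x0 k.+1 = Mmat e eps *m col_mx (x k) (s k).
Proof. by rewrite [LHS]iterS -/(state e eps x0 k) vsubmxK. Qed.

Lemma xk0 : x 0 = x0.
Proof. exact: col_mxKu. Qed.

Lemma sk0 : s 0 = 0.
Proof. exact: col_mxKd. Qed.

Lemma error_succ k : err k.+1 = err k - L *m err k + eps *: s k.
Proof.
rewrite /consensus_error {1}/xk state_succ /Mmat mul_block_col col_mxKu.
rewrite mulmxBl mul1mx mul_scalar_mx.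
by rewrite mulmxBr Lmat_mul_const subr0 addrAC [_ - L *m _ - _]addrAC.
Qed.

Lemma sk_succ k : s k.+1 = L *m err k + s k - 2 *: (L *m s k) - eps *: s k.
Proof.
rewrite /consensus_error mulmxBr Lmat_mul_const subr0.
rewrite {1}/sk state_succ /Mmat mul_block_col col_mxKd.
rewrite (Smat_Lmat R sym) [(_ - eps%:M) *m _]mulmxBl [(1%:M - _) *m _]mulmxBl.
by rewrite mul1mx mul_scalar_mx -scalemxAl !addrA.
Qed.

Lemma mode_succ (c : 'rV[R]_n) p k : c *m L = p *: c ->
  mode c (err k.+1) = (1 - p) * mode c (err k) + eps * mode c (s k) /\
  mode c (s k.+1) = p * mode c (err k) + (1 - 2 * p - eps) * mode c (s k).
Proof.
move=> cL; rewrite error_succ sk_succ; move: (err k) (s k) => E S.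
by rewrite !(modeD, modeN, modeZ) !(mode_eigen _ cL); split; ring.
Qed.

Lemma mode_error0_const (c : 'rV[R]_n) :
  (forall i j, c 0 i = c 0 j) -> mode c (err 0) = 0.
Proof.
move=> c_const; pose i0 : 'I_n := Ordinal n_gt0.
rewrite /consensus_error xk0 /mode mxE.
rewrite (eq_bigr (fun i => c 0 i0 * (x0 i 0 - xa))) => [|i _]; last first.
  by rewrite (c_const i i0) !mxE.
rewrite -mulr_sumr sumrB sumr_const card_ord -[(_ / _) *+ _]mulr_natr.
rewrite divfK ?subrr ?mulr0 //.
by rewrite pnatr_eq0 -lt0n.
Qed.

Lemma mode_cvg0 (c : 'rV[R]_n) p : c *m L = p *: c ->
  (fun k => mode c (err k)) @ \oo --> 0 /\ (fun k => mode c (s k)) @ \oo --> 0.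
Proof.
move=> cL; have mS k := mode_succ k cL.
have [->|c_neq0] := eqVneq c 0.
  have -> : mode (0 : 'rV[R]_n) = fun=> 0 by apply: funext => z; exact: mode0l.
  by split; exact: cvg_cst.
have /andP[p_ge0 p_le] := Lmat_eigenvalue_bounds sym c_neq0 cL.
have [p0|p_neq0] := eqVneq p 0.
  have modes0 k : mode c (err k) = 0 /\ mode c (s k) = 0.
    elim: k => [|k [IHe IHs]].
      split; last by rewrite sk0 /mode mulmx0 mxE.
      by apply/mode_error0_const/(Lmat_kernel_const sym conn); rewrite cL p0 scale0r.
    by have [-> ->] := mS k; rewrite IHe IHs; split; ring.
  have [-> ->] : (fun k => mode c (err k)) = (fun=> 0) /\
                 (fun k => mode c (s k)) = (fun=> 0).
    by split; apply: funext => k; case: (modes0 k).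
  by split; exact: cvg_cst.
have ninv_le1 : n%:R^-1 <= 1 :> R by rewrite invf_le1 ?ler1n ?ltr0n.
apply: (@cvg_coupled_recurrence _ p eps) => //.
- by rewrite lt_def p_neq0.
- exact: le_trans ninv_le1.
- by apply: (lt_le_trans eps_lt); nra.
- by move=> k; case: (mS k).
- by move=> k; case: (mS k).
Qed.

Lemma error_entry k i : err k i 0 = x k i 0 - xa.
Proof. by rewrite !mxE. Qed.

Lemma consensus_of_eigenframe m (V : 'M[R]_(m, n)) (p : 'rV[R]_m) :
  V *m L = diag_mx p *m V -> V^T *m V = 1%:M ->
  forall i, (fun k => x k i 0) @ \oo --> xa /\ (fun k => s k i 0) @ \oo --> 0.
Proof.
move=> VL VV i.
have rowV_eigen j : row j V *m L = p 0 j *: row j V.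
  by rewrite -row_mul VL mul_diag_mx; apply/rowP => l; rewrite !mxE.
have modes j := mode_cvg0 (rowV_eigen j).
split; last exact: cvg_frame0 VV (fun j => (modes j).2) i.
have -> : (fun k => x k i 0) = fun k => xa + err k i 0.
  by apply: funext => k; rewrite error_entry addrC subrK.
rewrite -[X in _ --> X]addr0; apply: cvgD; first exact: cvg_cst.
exact: cvg_frame0 VV (fun j => (modes j).1) i.
Qed.

End Algorithm.

Theorem proposition4 (R : realType) (n : nat) (e : rel 'I_n) (eps : R) :
  (1 < n)%N ->
  no_selfloops e -> symmetric_graph e -> strongly_connected e ->
  0 < eps -> eps < (1 - n%:R^-1) * (2 - n%:R^-1) ->
  average_consensus e eps.
Proof.
(* Self-loops cancel in L = D - A and in S. *)
move=> n_gt1 _ sym conn eps_gt0 eps_lt x0.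
have [V [p [VL VV]]] := symmetric_eigenframe (Lmat_sym R sym).
exact (consensus_of_eigenframe x0 sym conn (ltnW n_gt1) eps_gt0 eps_lt VL VV).
Qed.
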